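(* Let $p$ be an odd prime, let $n$ be a positive integer with $\gcd(n,p)=1$, let $k\ge1$, and set $m=np^k$ and $K=\mathbb{Q}(\zeta_n)$. Let $f:\mathbb{F}_p\to\mathbb{C}$ satisfy $f(0)=0$, $f(x)$ an $m$-th root of unity for all $x\ne0$, and $$\sum_{x\in\mathbb{F}_p} f(x)\overline{f(x+h)}=\begin{cases}-1 & \text{if } h\neq 0,\\ p-1 & \text{if } h=0.\end{cases}$$ Then there is no integer $s$ such that $\zeta_{p^k}^s\,G(f,\psi)\in K$.
   Context: $\zeta_r=e^{2\pi i/r}$, $\psi(x)=e^{2\pi i x/p}$, and $G(f,\psi)=\sum_{x=0}^{p-1}f(x)\psi(x)$. *)

From HB Require Import structures.
From mathcomp Require Import all_boot all_order all_algebra all_field.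
Set Implicit Arguments. Unset Strict Implicit. Unset Printing Implicit Defensive.
Import Order.TTheory GRing.Theory Num.Theory.
Local Open Scope ring_scope.

(* Complex numbers are modelled by algC (algebraic complex numbers): all the
   quantities involved (roots of unity, Gauss sums) are algebraic. *)

(* zeta r = e^{2 pi i / r}.  r.-root (-1) is the r-th root of -1 of minimal
   nonnegative argument, i.e. e^{pi i / r} (and -1 for r = 1); its square is
   e^{2 pi i / r}. *)
Definition zeta (r : nat) : algC := (r.-root (-1)) ^+ 2.

Definition psi (p : nat) (x : 'F_p) : algC := zeta p ^+ (val x).

Definition gauss (p : nat) (f : 'F_p -> algC) : algC :=
  \sum_(x : 'F_p) f x * psi x.

Definition in_Qadj (alpha x : algC) : Prop :=
  exists a b : {poly rat},
    (map_poly ratr b).[alpha] != 0 /\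
    x = (map_poly ratr a).[alpha] / (map_poly ratr b).[alpha].

From HB Require Import structures.
From mathcomp Require Import all_boot all_order all_algebra all_field.
From mathcomp Require Import ring.
Set Implicit Arguments. Unset Strict Implicit. Unset Printing Implicit Defensive.
Import Order.TTheory GRing.Theory Num.Theory.
Local Open Scope ring_scope.

(* Let a = zeta_(p^k)^s G(f, psi) and suppose a lies in Q(zeta_n).  The
   autocorrelation condition gives sum f = 0 and |G(f, psi)|^2 = p, so
   a = sum_(x != 0) g_x psi(x) for (n p^k)-th roots of unity g_x of sum 0.
   For t prime to p, the automorphism of Q(zeta_(n p^k)) acting as t on the
   p^k-part and trivially on the n-part fixes a; averaging the resulting
   expressions for a over t < p^k turns the inner sums into geometric sums,
   whence phi(p^k) a = p^k b with b an algebraic integer.  Then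
   |b|^2 = (p - 1)^2 / p is a rational algebraic integer, but not an integer. *)

Lemma sum_expr_unity (R : idomainType) (w : R) (m : nat) : w ^+ m = 1 ->
  \sum_(i < m) w ^+ i = if w == 1 then m%:R else 0.
Proof.
move=> wm; have [->|w_neq1] := eqVneq w 1.
  by under eq_bigr do rewrite expr1n; rewrite sumr_const card_ord.
apply/eqP; have := subrX1 w m; rewrite wm subrr => /esym/eqP.
by rewrite mulf_eq0 subr_eq0 (negbTE w_neq1).
Qed.

Lemma unity_mul_conjC (w : algC) (m : nat) : (0 < m)%N -> w ^+ m = 1 ->
  w * w^* = 1.
Proof.
move=> m_gt0 wm; rewrite -normCK.
have : `|w| ^+ m == 1 by rewrite -normrX wm normr1.
by rewrite pexpr_eq1 // => /eqP ->; rewrite expr1n.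
Qed.

Lemma zeta_unity (r : nat) : (0 < r)%N -> zeta r ^+ r = 1.
Proof. by move=> r_gt0; rewrite /zeta exprAC rootCK // sqrrN expr1n. Qed.

Lemma zeta_neq1 (r : nat) : (1 < r)%N -> zeta r != 1.
Proof.
move=> r_gt1; rewrite /zeta sqrf_eq1 negb_or; apply/andP; split.
  apply/eqP=> root1; have := rootCK (ltnW r_gt1) (-1 : algC).
  rewrite root1 expr1n => /eqP.
  by rewrite -subr_eq0 opprK -(natrD _ 1 1) pnatr_eq0.
apply/eqP=> rootN1; have := @rootC_lt0 algC _ (-1) r_gt1.
by rewrite rootN1 ltrN10.
Qed.

Section GaussSum.
Variable p : nat.
Hypothesis p_pr : prime p.

Lemma psi_unity (x : 'F_p) : psi x ^+ p = 1.
Proof. by rewrite /psi exprAC zeta_unity ?prime_gt0 ?expr1n. Qed.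

Lemma psi0 : psi (0 : 'F_p) = 1.
Proof. exact: expr0. Qed.

Lemma psiD (x y : 'F_p) : psi (x + y) = psi x * psi y.
Proof.
rewrite /psi -exprD /=; apply: expr_mod.
by rewrite (Fp_cast p_pr) zeta_unity ?prime_gt0.
Qed.

Lemma sum_psi : \sum_(x : 'F_p) psi x = 0.
Proof.
have zeta_ord : zeta p ^+ (Zp_trunc (pdiv p)).+2 = 1.
  by rewrite (Fp_cast p_pr) zeta_unity ?prime_gt0.
rewrite [LHS](@sum_expr_unity _ _ _ zeta_ord) ifN //.
by rewrite zeta_neq1 ?prime_gt1.
Qed.

Lemma sum_shift (g : 'F_p -> algC) (x : 'F_p) :
  \sum_(h : 'F_p) g (x + h) = \sum_(h : 'F_p) g h.
Proof. by rewrite [RHS](reindex_inj (addrI x)). Qed.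

Variable f : 'F_p -> algC.
Hypothesis autocorr : forall h : 'F_p,
  \sum_(x : 'F_p) f x * (f (x + h))^* = (if h == 0 then (p - 1)%:R else -1).

Lemma sum_autocorr_eq0 : \sum_(x : 'F_p) f x = 0.
Proof.
have sum_corr : \sum_(h : 'F_p) \sum_(x : 'F_p) f x * (f (x + h))^* = 0.
  rewrite (eq_bigr _ (fun h _ => autocorr h)) (bigD1 0) //=.
  rewrite (eq_bigr (fun _ => -1)) => [|h /negbTE -> //].
  by rewrite sumr_const cardC1 card_Fp // subn1 mulNrn subrr.
move/eqP: sum_corr; rewrite exchange_big /=.
under eq_bigr => x _ do rewrite -mulr_sumr (sum_shift (fun y => (f y)^*)).
by rewrite -mulr_suml -rmorph_sum mul_conjC_eq0 => /eqP.
Qed.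

Lemma psi_mul_conjC (x : 'F_p) : psi x * (psi x)^* = 1.
Proof. exact: unity_mul_conjC (prime_gt0 p_pr) (psi_unity x). Qed.

Lemma gauss_mul_conjC : gauss f * (gauss f)^* = p%:R.
Proof.
have shift_term x h : f x * psi x * (f (x + h) * psi (x + h))^* =
    (psi h)^* * (f x * (f (x + h))^*).
  by rewrite psiD !rmorphM /= -[RHS]mulr1 -(psi_mul_conjC x); ring.
have autocorrE h : \sum_(x : 'F_p) f x * (f (x + h))^* =
    (if h == 0 then p%:R else 0) - 1.
  by rewrite autocorr; case: eqP; rewrite ?sub0r // natrB ?prime_gt0.
rewrite /gauss rmorph_sum mulr_suml.
under eq_bigr => x _ do
  rewrite mulr_sumr -(sum_shift (fun y => f x * psi x * (f y * psi y)^*) x).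
under eq_bigr => x _ do under eq_bigr => h _ do rewrite shift_term.
rewrite exchange_big /=.
under eq_bigr => h _ do rewrite -mulr_sumr autocorrE mulrBr mulr1.
rewrite sumrB -rmorph_sum sum_psi rmorph0 subr0 (bigD1 0) //= psi0 rmorph1 mul1r.
by rewrite big1 ?addr0 // => h /negbTE ->; rewrite mulr0.
Qed.

End GaussSum.

Lemma rmorph_fix_Qadj (u : {rmorphism algC -> algC}) (z a : algC) :
  u z = z -> in_Qadj z a -> u a = a.
Proof.
move=> uz [A [B [_ ->]]].
have u_horner C : u (map_poly ratr C).[z] = (map_poly ratr C).[z].
  rewrite -horner_map uz -map_poly_comp; congr _.[_].
  by apply: eq_map_poly => c /=; rewrite fmorph_rat.
by rewrite fmorph_div /= !u_horner.
Qed.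

Section CyclotomicAverage.
Variables (p k n : nat) (zn : algC).
Hypotheses (p_pr : prime p) (k_gt0 : (0 < k)%N) (n_gt0 : (0 < n)%N).
Hypotheses (n_coprime_p : coprime n p) (zn_unity : zn ^+ n = 1).

Local Notation P := (p ^ k)%N.
(* The CRT idempotents of Z/(n p^k): g = g^e0 * g^e1 splits an (n p^k)-th
   root of unity into its n-th and p^k-th parts. *)
Local Notation e0 := (chinese n P 1 0).
Local Notation e1 := (chinese n P 0 1).

Let n_coprime_P : coprime n P. Proof. by rewrite coprimeXr. Qed.
Let p_dvd_P : (p %| P)%N. Proof. by rewrite dvdn_exp. Qed.

Lemma expr_chinese (g : algC) (t : nat) : g ^+ (n * P) = 1 ->
  g ^+ chinese n P 1 t = g ^+ e0 * (g ^+ e1) ^+ t.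
Proof.
move=> g_unity; rewrite -exprM -exprD -(expr_mod _ g_unity).
rewrite -[RHS](expr_mod _ g_unity); congr (g ^+ _); apply/eqP.
rewrite chinese_remainder //; apply/andP; split.
  rewrite chinese_modl // -modnDm -modnMml !chinese_modl //.
  by rewrite mod0n mul0n mod0n addn0 modn_mod.
rewrite chinese_modr // -modnDm -modnMml !chinese_modr //.
by rewrite mod0n add0n modn_mod modnMml mul1n.
Qed.

Lemma exists_aut_fix_Qadj (t : nat) : coprime t p ->
  exists u : {rmorphism algC -> algC},
    (forall a, in_Qadj zn a -> u a = a) /\
    (forall g, g ^+ (n * P) = 1 -> u g = g ^+ e0 * (g ^+ e1) ^+ t).
Proof.
move=> t_coprime_p.
have t'_coprime : coprime (chinese n P 1 t) (n * P).
  rewrite coprimeMr -coprime_modl chinese_modl // coprime_modl coprime1n /=.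
  by rewrite -coprime_modl chinese_modr // coprime_modl coprime_pexpr.
have [u u_unity] := Qn_aut_exists t'_coprime.
exists u; split=> [a|g g_unity]; last by rewrite u_unity // expr_chinese.
apply: rmorph_fix_Qadj; rewrite u_unity ?exprM ?zn_unity ?expr1n //.
by rewrite -(expr_mod _ zn_unity) chinese_modl // expr_mod // expr1.
Qed.

Lemma sum_coprime_exprB (e w : algC) : e ^+ P = 1 -> w ^+ p = 1 ->
  \sum_(t < P | coprime t p) ((e * w) ^+ t - e ^+ t) =
    P%:R * ((e * w == 1)%:R - (e == 1)%:R).
Proof.
move=> e_unity w_unity.
have w_P : w ^+ P = 1 by rewrite -(expr_mod _ w_unity) (eqP p_dvd_P) expr0.
have -> : \sum_(t < P | coprime t p) ((e * w) ^+ t - e ^+ t) =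
          \sum_(t < P) ((e * w) ^+ t - e ^+ t).
  rewrite [RHS](bigID (fun t : 'I_P => coprime t p)) /=.
  rewrite [X in _ + X]big1 ?addr0 //.
  move=> t; rewrite coprime_sym prime_coprime // negbK => /eqP p_dvd_t.
  by rewrite exprMn -(expr_mod _ w_unity) p_dvd_t expr0 mulr1 subrr.
rewrite sumrB !sum_expr_unity ?exprMn ?e_unity ?w_P ?mulr1 //.
by case: eqP; case: eqP => _ _;
  rewrite ?subrr ?subr0 ?sub0r ?mulr0 ?mulr1 ?mulrN1.
Qed.

Lemma card_coprime_ord : #|[pred t : 'I_P | coprime t p]| = totient P.
Proof.
rewrite totient_count_coprime big_mkord -sum1_card big_mkcond /=.
by apply: eq_bigr => t _; rewrite inE coprime_pexpl // coprime_sym; case: coprime.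
Qed.

Lemma Qadj_unity_sum_totient_Aint (I : finType) (A : pred I) (gam w : I -> algC)
    (a : algC) :
  in_Qadj zn a -> (forall x, A x -> gam x ^+ (n * P) = 1) ->
  (forall x, w x ^+ p = 1) ->
  \sum_(x | A x) gam x = 0 -> a = \sum_(x | A x) gam x * w x ->
  exists2 b, b \in Aint & (totient P)%:R * a = P%:R * b.
Proof.
move=> aQ gam_unity w_unity sum_gam aE.
have w_e0 x : w x ^+ e0 = 1.
  rewrite -(expr_mod _ (w_unity x)) -(modn_dvdm _ p_dvd_P).
  by rewrite chinese_modr // !mod0n expr0.
have w_e1 x : w x ^+ e1 = w x.
  rewrite -(expr_mod _ (w_unity x)) -(modn_dvdm _ p_dvd_P) chinese_modr //.
  by rewrite modn_dvdm // modn_small ?prime_gt1 ?expr1.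
have w_nP x : w x ^+ (n * P) = 1.
  by rewrite -(expr_mod _ (w_unity x)) (eqP (dvdn_mull n p_dvd_P)) expr0.
have gam_e1 x : A x -> (gam x ^+ e1) ^+ P = 1.
  move=> Ax; rewrite -exprM -(expr_mod _ (gam_unity x Ax)).
  by rewrite -muln_modl ?expn_gt0 ?prime_gt0 // chinese_modl // mod0n mul0n expr0.
have a_conj t : coprime t p -> a = \sum_(x | A x)
    gam x ^+ e0 * ((gam x ^+ e1 * w x) ^+ t - (gam x ^+ e1) ^+ t).
  case/exists_aut_fix_Qadj => u [u_fix u_unity].
  rewrite -(u_fix a aQ) aE -[LHS]subr0 -[X in _ - X](rmorph0 u).
  rewrite -[X in _ - u X]sum_gam !rmorph_sum -sumrB.
  apply: eq_bigr => x Ax; rewrite rmorphM /= !u_unity ?gam_unity ?w_e0 ?w_e1 //.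
  by rewrite mul1r exprMn mulrBr !mulrA.
exists (\sum_(x | A x)
    gam x ^+ e0 * ((gam x ^+ e1 * w x == 1)%:R - (gam x ^+ e1 == 1)%:R)).
  apply: rpred_sum => x Ax; rewrite rpredM ?rpredB ?rpred_nat //.
  apply/rpredX/(@Aint_unity_root (n * P)); last by rewrite unity_rootE gam_unity.
  by rewrite muln_gt0 n_gt0 expn_gt0 prime_gt0.
rewrite -card_coprime_ord mulr_natl -sumr_const.
rewrite (eq_bigl (fun t : 'I_P => coprime t p)) //.
rewrite (eq_bigr _ (fun (t : 'I_P) ct => a_conj t ct)).
rewrite exchange_big mulr_sumr; apply: eq_bigr => x Ax.
by rewrite -mulr_sumr sum_coprime_exprB ?gam_e1 // mulrCA.
Qed.

End CyclotomicAverage.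

Lemma pred_sqr_div_notin_Aint (p : nat) : prime p ->
  (p.-1%:R ^+ 2 / p%:R : algC) \notin Aint.
Proof.
move=> p_pr; apply/negP => qA.
have qQ : (p.-1%:R ^+ 2 / p%:R : algC) \in Crat.
  by rewrite rpred_div ?rpredX ?rpred_nat.
have /intrP [m qE] := Cint_rat_Aint qQ qA.
have sqr_eq : (p.-1 ^ 2)%:Z = p%:Z * m.
  apply: (@intr_inj algC); rewrite intrM -qE -!pmulrn natrX mulrC divfK //.
  by rewrite pnatr_eq0 -lt0n prime_gt0.
have : (p%:Z %| (p.-1 ^ 2)%:Z)%Z by rewrite sqr_eq dvdz_mulr.
rewrite dvdzE /= Euclid_dvdX // andbT gtnNdvd //.
  by rewrite -subn1 subn_gt0 prime_gt1.
by rewrite prednK ?prime_gt0.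
Qed.

Lemma norm_totient_pfactor_ratio (p k : nat) (a b : algC) :
  prime p -> (0 < k)%N -> a * a^* = p%:R ->
  (totient (p ^ k))%:R * a = (p ^ k)%:R * b -> b * b^* = p.-1%:R ^+ 2 / p%:R.
Proof.
move=> p_pr k_gt0 a_norm; rewrite totient_pfactor // -{2}(prednK k_gt0) expnS.
have p_neq0 : (p%:R : algC) != 0 by rewrite pnatr_eq0 -lt0n prime_gt0.
have q_neq0 : ((p ^ k.-1)%N%:R : algC) != 0.
  by rewrite pnatr_eq0 -lt0n expn_gt0 prime_gt0.
rewrite !natrM !(mulrAC _ (p ^ k.-1)%:R) => /(mulIf q_neq0) ab.
have -> : b = p.-1%:R / p%:R * a.
  by apply: (mulfI p_neq0); rewrite -ab; field.
by rewrite rmorphM mulrACA a_norm fmorph_div /= !conjC_nat; field.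
Qed.

Theorem lemma4 (p n k : nat) (f : 'F_p -> algC) :
  prime p -> odd p -> (0 < n)%N -> coprime n p -> (1 <= k)%N ->
  f 0 = 0 ->
  (forall x : 'F_p, x != 0 -> f x ^+ (n * p ^ k) = 1) ->
  (forall h : 'F_p,
     \sum_(x : 'F_p) f x * (f (x + h))^* =
       (if h == 0 then (p - 1)%:R else -1)) ->
  ~ (exists s : int, in_Qadj (zeta n) (zeta (p ^ k) ^ s * gauss f)).
Proof.
move=> p_pr _ n_gt0 n_coprime_p k_gt0 f0 f_unity autocorr [s].
set P := (p ^ k)%N; set c := zeta P ^ s; set a := c * gauss f => aQ.
have P_gt0 : (0 < P)%N by rewrite expn_gt0 prime_gt0.
have c_unity : c ^+ P = 1 by rewrite exprnP exprzAC -exprnP zeta_unity ?exp1rz.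
have cf_unity x : x != 0 -> (c * f x) ^+ (n * P) = 1.
  by move=> /f_unity fx1; rewrite exprMn fx1 mulr1 mulnC exprM c_unity expr1n.
have sum_cf : \sum_(x | x != 0) c * f x = 0.
  have := sum_autocorr_eq0 p_pr autocorr; rewrite (bigD1 0) //= f0 add0r.
  by rewrite -mulr_sumr => ->; rewrite mulr0.
have aE : a = \sum_(x | x != 0) c * f x * psi x.
  rewrite /a /gauss (bigD1 0) //= f0 mul0r add0r mulr_sumr.
  by apply: eq_bigr => x _; rewrite mulrA.
have a_norm : a * a^* = p%:R.
  rewrite rmorphM mulrACA (unity_mul_conjC P_gt0 c_unity) mul1r.
  exact: gauss_mul_conjC.
have [b bA /(norm_totient_pfactor_ratio p_pr k_gt0 a_norm) b_norm] :=
  Qadj_unity_sum_totient_Aint p_pr k_gt0 n_gt0 n_coprime_p (zeta_unity n_gt0)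
    aQ cf_unity (psi_unity p_pr) sum_cf aE.
have := pred_sqr_div_notin_Aint p_pr.
by rewrite -b_norm rpredM ?Aint_aut.
Qed.
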